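(* For all graphs $G$ and $H$: (i) $\max\{\gamma^{SLD}(G),\gamma^{SLD}(H)\}\le\gamma^{SLD}(G\,\square\, H)\le\min\{|V(H)|\,\gamma^{SLD}(G),\ |V(G)|\,\gamma^{SLD}(H)\}$; (ii) $\max\{\gamma^{DLD}(G),\gamma^{DLD}(H)\}\le\gamma^{DLD}(G\,\square\, H)\le\min\{|V(H)|\,\gamma^{DLD}(G),\ |V(G)|\,\gamma^{DLD}(H)\}$.
   Context: All graphs are finite, simple and undirected (not necessarily connected). For a vertex $u$, $N(u)$ is its set of neighbours and $N[u]=N(u)\cup\{u\}$. A code is a non-empty subset $C$ of the vertex set $V$; $I(C;u)=N[u]\cap C$. A code $C$ is self-locating-dominating if for every $u\in V\setminus C$ we have $I(C;u)\neq\emptyset$ and $\bigcap_{c\in I(C;u)}N[c]=\{u\}$. A code $C$ is solid-locating-dominating if $I(C;u)\ne\emptyset$ for every $u\in V\setminus C$ and $I(C;u)\not\subseteq I(C;v)$ for all distinct $u,v\in V\setminus C$. $\gamma^{SLD}$ and $\gamma^{DLD}$ denote the minimum sizes of such codes. The Cartesian product $G\square H$ has vertex set $V(G)\times V(H)$, with $(u,v)$ adjacent to $(u',v')$ iff either $u=u'$ and $vv'\in E(H)$, or $uu'\in E(G)$ and $v=v'$. *)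

From mathcomp Require Import all_boot all_order.
Set Implicit Arguments. Unset Strict Implicit. Unset Printing Implicit Defensive.

(* A finite simple graph: vertex type T : finType with an adjacency relation
   e that is symmetric and irreflexive (hypotheses given in the theorem). *)

Definition cnbhd (T : finType) (e : rel T) (u : T) : {set T} :=
  [set v | (v == u) || e u v].

Definition Icode (T : finType) (e : rel T) (C : {set T}) (u : T) : {set T} :=
  cnbhd e u :&: C.

Definition is_SLD (T : finType) (e : rel T) (C : {set T}) : bool :=
  (C != set0) &&
  [forall u, (u \notin C) ==>
     ((Icode e C u != set0) &&
      ((\bigcap_(c in Icode e C u) cnbhd e c) == [set u]))].

Definition is_DLD (T : finType) (e : rel T) (C : {set T}) : bool :=
  (C != set0) &&
  [forall u, (u \notin C) ==> (Icode e C u != set0)] &&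
  [forall u, forall v, ((u \notin C) && (v \notin C) && (u != v)) ==>
     ~~ (Icode e C u \subset Icode e C v)].

(* minimum size of a code satisfying P (V itself is always an SLD/DLD code
   when V is nonempty, so the default #|T| is never the binding value then) *)
Definition min_code (T : finType) (P : {set T} -> bool) : nat :=
  \big[minn/#|T|]_(C : {set T} | P C) #|C|.

Definition gammaSLD (T : finType) (e : rel T) : nat := min_code (is_SLD e).
Definition gammaDLD (T : finType) (e : rel T) : nat := min_code (is_DLD e).

Definition cart_rel (T U : finType) (eG : rel T) (eH : rel U) : rel (T * U) :=
  fun x y => ((x.1 == y.1) && eH x.2 y.2) || (eG x.1 y.1 && (x.2 == y.2)).

(* A closed neighbourhood of G □ H is N[(c,d)] = {c} x N[d] ∪ N[c] x {d}, so
   every row G x {v} is a copy of G, and a vertex (u,v) whose first coordinate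
   lies outside the first projection of a code D meets D only inside its own
   row. Hence a code C of G lifts to the code C x V(H) of G □ H, and the first
   projection of a code of G □ H is a code of G; this gives the bounds in terms
   of G. Those in terms of H follow because G □ H ≅ H □ G and the code numbers
   are isomorphism invariants. *)
From mathcomp Require Import all_boot all_order.
Set Implicit Arguments. Unset Strict Implicit. Unset Printing Implicit Defensive.

Lemma min_code_le (T : finType) (P : pred {set T}) C : P C -> min_code P <= #|C|.
Proof.
move=> PC; rewrite /min_code -big_filter.
have : C \in [seq X <- index_enum {set T} | P X] by rewrite mem_filter PC mem_index_enum.
elim: [seq _ <- _ | _] => //= C' s IHs; rewrite big_cons inE => /orP[/eqP<-|/IHs].
  exact: geq_minl.
exact: leq_trans (geq_minr _ _).
Qed.

Lemma min_code_ex (T : finType) (P : pred {set T}) :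
  P setT -> exists2 C, P C & min_code P = #|C|.
Proof.
move=> PT; case: (arg_minnP (fun C : {set T} => #|C|) PT) => C PC Cmin.
exists C => //; apply/eqP; rewrite eqn_leq min_code_le //=.
apply: (big_ind (fun n => #|C| <= n)) => [||//]; first exact: max_card.
by move=> m n Cm Cn; rewrite leq_min Cm.
Qed.

Lemma leq_min_code_map (T T' : finType) (P : pred {set T}) (Q : pred {set T'})
    (F : {set T} -> {set T'}) k :
  P setT -> (forall C, P C -> Q (F C)) -> (forall C, #|F C| <= k * #|C|) ->
  min_code Q <= k * min_code P.
Proof.
move=> PT PQ cardF; have [C PC ->] := min_code_ex PT.
exact: leq_trans (min_code_le (PQ C PC)) (cardF C).
Qed.

Lemma leq_min_code_map1 (T T' : finType) (P : pred {set T}) (Q : pred {set T'})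
    (F : {set T} -> {set T'}) :
  P setT -> (forall C, P C -> Q (F C)) -> (forall C, #|F C| <= #|C|) ->
  min_code Q <= min_code P.
Proof.
move=> PT PQ cardF; rewrite -(mul1n (min_code P)).
by apply: leq_min_code_map PT PQ _ => C; rewrite mul1n.
Qed.

Section Codes.
Variables (T : finType) (e : rel T).

Definition dominating (C : {set T}) :=
  forall u, u \notin C -> exists2 c, c \in C & c \in cnbhd e u.

(* For symmetric [e] the inclusion {u} ⊆ ⋂ N[c] is automatic, so only the
   converse inclusion is recorded. *)
Definition self_locating (C : {set T}) :=
  [/\ C != set0, dominating C &
      forall u x, u \notin C ->
        {in C, forall c, c \in cnbhd e u -> x \in cnbhd e c} -> x = u].

Definition solid_locating (C : {set T}) :=
  [/\ C != set0, dominating C &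
      forall u w, u \notin C -> w \notin C -> u != w ->
        exists2 c, c \in C & (c \in cnbhd e u) && (c \notin cnbhd e w)].

Lemma cnbhd_refl u : u \in cnbhd e u.
Proof. by rewrite inE eqxx. Qed.

Lemma mem_Icode (C : {set T}) u c : (c \in Icode e C u) = (c \in C) && (c \in cnbhd e u).
Proof. by rewrite in_setI andbC. Qed.

Lemma Icode_neq0P (C : {set T}) u :
  reflect (exists2 c, c \in C & c \in cnbhd e u) (Icode e C u != set0).
Proof.
apply: (iffP (set0Pn _)) => [[c]|[c cC cu]]; last by exists c; rewrite mem_Icode cC.
by rewrite mem_Icode => /andP[]; exists c.
Qed.

Lemma is_SLDP C : symmetric e -> reflect (self_locating C) (is_SLD e C).
Proof.
move=> sym_e; have mem_cnbhdC u c : (u \in cnbhd e c) = (c \in cnbhd e u).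
  by rewrite !inE eq_sym sym_e.
apply: (iffP andP) => [[C0 /forallP codeC]|[C0 domC sepC]].
  have code u : u \notin C -> _ := implyP (codeC u).
  split=> // [u /code/andP[/Icode_neq0P] //|u x /code/andP[_ /eqP capE] xN].
  apply/set1P; rewrite -capE; apply/bigcapP => c; rewrite mem_Icode => /andP[].
  exact: xN.
split=> //; apply/forallP => u; apply/implyP => uC.
rewrite (introT (Icode_neq0P _ _) (domC u uC)); apply/eqP/setP => x; rewrite inE.
apply/bigcapP/eqP => [xN|->{x} c]; last by rewrite mem_Icode mem_cnbhdC => /andP[].
by apply: sepC uC _ => c cC cu; apply: xN; rewrite mem_Icode cC.
Qed.

Lemma is_DLDP C : reflect (solid_locating C) (is_DLD e C).
Proof.
apply: (iffP andP) => [[/andP[C0 /forallP domC] /forallP sepC]|[C0 domC sepC]].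
  split=> // [u /(implyP (domC u))/Icode_neq0P //|u w uC wC uw].
  have /subsetPn[c] : ~~ (Icode e C u \subset Icode e C w).
    by apply: (implyP (forallP (sepC u) w)); rewrite uC wC uw.
  by rewrite !mem_Icode => /andP[cC cu]; rewrite cC /= => cw; exists c; rewrite ?cu.
split; first (apply/andP; split=> //; apply/forallP => u; apply/implyP => uC).
  exact/Icode_neq0P/domC.
apply/forallP => u; apply/forallP => w; apply/implyP => /andP[/andP[uC wC] uw].
have [c cC /andP[cu cw]] := sepC u w uC wC uw.
by apply/subsetPn; exists c; rewrite !mem_Icode cC // (negbTE cw).
Qed.

Lemma is_SLD_setT : #|T| > 0 -> is_SLD e setT.
Proof.
case/card_gt0P=> x _; apply/andP; split; last by apply/forallP => u; rewrite inE.
by apply/set0Pn; exists x; rewrite inE.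
Qed.

Lemma is_DLD_setT : #|T| > 0 -> is_DLD e setT.
Proof.
case/card_gt0P=> x _; apply/andP; split; [apply/andP; split|].
- by apply/set0Pn; exists x; rewrite inE.
- by apply/forallP => u; rewrite inE.
- by apply/forallP => u; apply/forallP => w; rewrite inE.
Qed.

End Codes.

Section Isomorphism.
Variables (T T' : finType) (e : rel T) (e' : rel T') (f : T -> T').
Hypotheses (f_bij : bijective f) (f_edge : forall x y, e' (f x) (f y) = e x y).

Let f_inj : injective f := bij_inj f_bij.

Lemma mem_cnbhd_iso x y : (f x \in cnbhd e' (f y)) = (x \in cnbhd e y).
Proof. by rewrite !inE (inj_eq f_inj) f_edge. Qed.

Lemma forall_iso (P : T' -> Prop) : (forall x, P (f x)) -> forall x', P x'.
Proof. by case: f_bij => g _ gK Pf x'; rewrite -[x']gK. Qed.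

Lemma dominating_iso C : dominating e C -> dominating e' (f @: C).
Proof.
move=> domC; apply: forall_iso => u; rewrite mem_imset // => /domC[c cC cu].
by exists (f c); rewrite ?imset_f ?mem_cnbhd_iso.
Qed.

Lemma self_locating_iso C : self_locating e C -> self_locating e' (f @: C).
Proof.
case=> C0 domC sepC; split; [by rewrite imset_eq0 | exact: dominating_iso |].
apply: forall_iso => u; apply: forall_iso => x; rewrite mem_imset // => uC xN.
congr f; apply: sepC uC _ => c cC cu; rewrite -mem_cnbhd_iso.
by apply: xN; rewrite ?imset_f ?mem_cnbhd_iso.
Qed.

Lemma solid_locating_iso C : solid_locating e C -> solid_locating e' (f @: C).
Proof.
case=> C0 domC sepC; split; [by rewrite imset_eq0 | exact: dominating_iso |].
apply: forall_iso => u; apply: forall_iso => w; rewrite !mem_imset // (inj_eq f_inj).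
move=> uC wC /(sepC u w uC wC)[c cC cuw].
by exists (f c); rewrite ?imset_f ?mem_cnbhd_iso.
Qed.

Lemma gammaSLD_iso :
  symmetric e -> symmetric e' -> #|T| > 0 -> gammaSLD e' <= gammaSLD e.
Proof.
move=> sym_e sym_e' nT.
apply: (leq_min_code_map1 (F := fun C => f @: C)) (is_SLD_setT e nT) _ _ => C.
  by move/(is_SLDP _ sym_e)/self_locating_iso/(is_SLDP _ sym_e').
exact: leq_imset_card.
Qed.

Lemma gammaDLD_iso : #|T| > 0 -> gammaDLD e' <= gammaDLD e.
Proof.
move=> nT; apply: (leq_min_code_map1 (F := fun C => f @: C)) (is_DLD_setT e nT) _ _ => C.
  by move/is_DLDP/solid_locating_iso/is_DLDP.
exact: leq_imset_card.
Qed.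

End Isomorphism.

Section CartesianProduct.
Variables (T U : finType) (eG : rel T) (eH : rel U).
Local Notation E := (cart_rel eG eH).

Lemma cart_rel_sym : symmetric eG -> symmetric eH -> symmetric E.
Proof. by move=> sG sH [a b] [c d]; rewrite /cart_rel /= sG sH (eq_sym a) (eq_sym b). Qed.

Lemma cart_rel_swap x y : cart_rel eH eG (swap_pair x) (swap_pair y) = E x y.
Proof.
by case: x y => [a b] [c d]; rewrite /cart_rel /= orbC andbC [eG a c && _]andbC.
Qed.

Lemma mem_cnbhd_cart a b c d : ((a, b) \in cnbhd E (c, d)) =
  ((a == c) && (b \in cnbhd eH d)) || ((b == d) && (a \in cnbhd eG c)).
Proof.
rewrite !inE /cart_rel /= xpair_eqE (eq_sym c) (eq_sym d).
by case: (a == c); case: (b == d); rewrite /= ?andbT ?andbF ?orbT ?orbF.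
Qed.

Lemma mem_cnbhd_row a c v : ((a, v) \in cnbhd E (c, v)) = (a \in cnbhd eG c).
Proof.
rewrite mem_cnbhd_cart cnbhd_refl eqxx andbT.
by apply/orb_idl => /eqP->; apply: cnbhd_refl.
Qed.

Lemma mem_cnbhd_cart_fst a b c d : (a, b) \in cnbhd E (c, d) -> a \in cnbhd eG c.
Proof. by rewrite mem_cnbhd_cart => /orP[/andP[/eqP-> _]|/andP[]] //; apply: cnbhd_refl. Qed.

Lemma mem_cnbhd_cart_offrow a b c d :
  (a, b) \in cnbhd E (c, d) -> a != c -> b = d /\ a \in cnbhd eG c.
Proof. by rewrite mem_cnbhd_cart => /orP[/andP[/eqP-> _]|/andP[/eqP]]; rewrite ?eqxx. Qed.

Variable v0 : U.

Let fst_proj (D : {set T * U}) : {set T} := [set x.1 | x in D].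

Lemma fst_proj_neq0 D : D != set0 -> fst_proj D != set0.
Proof. by rewrite imset_eq0. Qed.

Lemma mem_setXT (C : {set T}) a b : ((a, b) \in setX C [set: U]) = (a \in C).
Proof. by rewrite !inE andbT. Qed.

Lemma setXT_neq0 (C : {set T}) : C != set0 -> setX C [set: U] != set0.
Proof. by case/set0Pn=> c cC; apply/set0Pn; exists (c, v0); rewrite mem_setXT. Qed.

Lemma notin_fst_proj D u v : u \notin fst_proj D -> (u, v) \notin D.
Proof. by apply: contra => uvD; apply/imsetP; exists (u, v). Qed.

Lemma cnbhd_off_fst_proj D u v d : u \notin fst_proj D -> d \in D ->
  d \in cnbhd E (u, v) -> d = (d.1, v) /\ d.1 \in cnbhd eG u.
Proof.
case: d => d1 d2 uD dD /mem_cnbhd_cart_offrow[].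
  by apply: contraNneq uD => <-; apply/imsetP; exists (d1, d2).
by move=> -> d1u.
Qed.

Lemma dominating_lift (C : {set T}) : dominating eG C -> dominating E (setX C [set: U]).
Proof.
move=> domC [u v]; rewrite mem_setXT => /domC[c cC cu].
by exists (c, v); rewrite ?mem_setXT ?mem_cnbhd_row.
Qed.

Lemma dominating_proj D : dominating E D -> dominating eG (fst_proj D).
Proof.
move=> domD u uD; have [d dD du] := domD _ (notin_fst_proj v0 uD).
have [_ d1u] := cnbhd_off_fst_proj uD dD du.
by exists d.1 => //; apply/imsetP; exists d.
Qed.

Lemma self_locating_lift (C : {set T}) :
  self_locating eG C -> self_locating E (setX C [set: U]).
Proof.
case=> C0 domC sepC; split; [exact: setXT_neq0 | exact: dominating_lift |].
move=> [u v] [x1 x2]; rewrite mem_setXT => uC xN.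
have x1u : x1 = u.
  apply: sepC uC _ => c cC cu; apply: (@mem_cnbhd_cart_fst _ x2 _ v).
  by apply: xN; rewrite ?mem_setXT ?mem_cnbhd_row.
subst x1; have [c cC cu] := domC u uC.
have uc : u != c by apply: contraNneq uC => ->.
have uN : (u, x2) \in cnbhd E (c, v) by apply: xN; rewrite ?mem_setXT ?mem_cnbhd_row.
by have [-> _] := mem_cnbhd_cart_offrow uN uc.
Qed.

Lemma self_locating_proj D : self_locating E D -> self_locating eG (fst_proj D).
Proof.
case=> D0 domD sepD; split; [exact: fst_proj_neq0 | exact: dominating_proj |].
move=> u x uD xN; suff [] : (x, v0) = (u, v0) by [].
apply: sepD (notin_fst_proj v0 uD) _ => d dD du.
have [-> d1u] := cnbhd_off_fst_proj uD dD du.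
by rewrite mem_cnbhd_row; apply: xN d1u; apply/imsetP; exists d.
Qed.

Lemma solid_locating_lift (C : {set T}) :
  solid_locating eG C -> solid_locating E (setX C [set: U]).
Proof.
case=> C0 domC sepC; split; [exact: setXT_neq0 | exact: dominating_lift |].
move=> [u v] [w v']; rewrite !mem_setXT => uC wC.
have [<- uvw|uw _] := eqVneq u w.
  have [c cC cu] := domC u uC; exists (c, v); rewrite ?mem_setXT // mem_cnbhd_row cu.
  apply/negP => /mem_cnbhd_cart_offrow[|vv' _]; first by apply: contraNneq uC => <-.
  by move: uvw; rewrite vv' eqxx.
have [c cC /andP[cu cw]] := sepC u w uC wC uw.
exists (c, v); rewrite ?mem_setXT // mem_cnbhd_row cu.
by apply: contra cw => /mem_cnbhd_cart_fst.
Qed.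

Lemma solid_locating_proj D : solid_locating E D -> solid_locating eG (fst_proj D).
Proof.
case=> D0 domD sepD; split; [exact: fst_proj_neq0 | exact: dominating_proj |].
move=> u w uD wD uw.
have uvw : (u, v0) != (w, v0) by rewrite xpair_eqE (negbTE uw).
have [d dD /andP[du dw]] := sepD _ _ (notin_fst_proj v0 uD) (notin_fst_proj v0 wD) uvw.
have [dE d1u] := cnbhd_off_fst_proj uD dD du.
exists d.1; first by apply/imsetP; exists d.
by rewrite d1u -(mem_cnbhd_row _ _ v0) -dE.
Qed.

End CartesianProduct.

Lemma gammaSLD_cart_fst (T U : finType) (eG : rel T) (eH : rel U) :
  symmetric eG -> symmetric eH -> #|T| > 0 -> #|U| > 0 ->
  gammaSLD eG <= gammaSLD (cart_rel eG eH) <= #|U| * gammaSLD eG.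
Proof.
move=> sG sH nT nU; have [v0 _] := card_gt0P nU; have sE := cart_rel_sym sG sH.
have nTU : #|{: T * U}| > 0 by rewrite card_prod muln_gt0 nT.
apply/andP; split.
  apply: (leq_min_code_map1 (F := fun D => [set x.1 | x in D])) (is_SLD_setT _ nTU) _ _;
    last exact: leq_imset_card.
  by move=> D /(is_SLDP _ sE)/(self_locating_proj v0)/(is_SLDP _ sG).
apply: (leq_min_code_map (F := fun C => setX C [set: U])) (is_SLD_setT _ nT) _ _ => C;
  last by rewrite cardsX cardsT mulnC.
by move/(is_SLDP _ sG)/(self_locating_lift eH v0)/(is_SLDP _ sE).
Qed.

Lemma gammaDLD_cart_fst (T U : finType) (eG : rel T) (eH : rel U) :
  #|T| > 0 -> #|U| > 0 ->
  gammaDLD eG <= gammaDLD (cart_rel eG eH) <= #|U| * gammaDLD eG.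
Proof.
move=> nT nU; have [v0 _] := card_gt0P nU.
have nTU : #|{: T * U}| > 0 by rewrite card_prod muln_gt0 nT.
apply/andP; split.
  apply: (leq_min_code_map1 (F := fun D => [set x.1 | x in D])) (is_DLD_setT _ nTU) _ _;
    last exact: leq_imset_card.
  by move=> D /is_DLDP/(solid_locating_proj v0)/is_DLDP.
apply: (leq_min_code_map (F := fun C => setX C [set: U])) (is_DLD_setT _ nT) _ _ => C;
  last by rewrite cardsX cardsT mulnC.
by move/is_DLDP/(solid_locating_lift eH v0)/is_DLDP.
Qed.

Section CartesianSwap.
Variables (T U : finType) (eG : rel T) (eH : rel U).
Hypotheses (symG : symmetric eG) (symH : symmetric eH) (neT : #|T| > 0) (neU : #|U| > 0).

Let swap_bij (A B : finType) : bijective (@swap_pair A B) :=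
  Bijective swap_pairK swap_pairK.

Let neTU : #|{: T * U}| > 0. Proof. by rewrite card_prod muln_gt0 neT. Qed.
Let neUT : #|{: U * T}| > 0. Proof. by rewrite card_prod muln_gt0 neU. Qed.

Lemma gammaSLD_cart_swap : gammaSLD (cart_rel eH eG) = gammaSLD (cart_rel eG eH).
Proof.
have [sGH sHG] := (cart_rel_sym symG symH, cart_rel_sym symH symG).
by apply/eqP; rewrite eqn_leq !(gammaSLD_iso (swap_bij _ _) (cart_rel_swap _ _)).
Qed.

Lemma gammaDLD_cart_swap : gammaDLD (cart_rel eH eG) = gammaDLD (cart_rel eG eH).
Proof.
by apply/eqP; rewrite eqn_leq !(gammaDLD_iso (swap_bij _ _) (cart_rel_swap _ _)).
Qed.

End CartesianSwap.

Theorem mainTheorem14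
  (T : finType) (eG : rel T) (symG : symmetric eG) (irrG : irreflexive eG)
  (U : finType) (eH : rel U) (symH : symmetric eH) (irrH : irreflexive eH)
  (neT : #|T| > 0) (neU : #|U| > 0) :
  (maxn (gammaSLD eG) (gammaSLD eH) <= gammaSLD (cart_rel eG eH)
   /\ gammaSLD (cart_rel eG eH) <= minn (#|U| * gammaSLD eG) (#|T| * gammaSLD eH))
  /\
  (maxn (gammaDLD eG) (gammaDLD eH) <= gammaDLD (cart_rel eG eH)
   /\ gammaDLD (cart_rel eG eH) <= minn (#|U| * gammaDLD eG) (#|T| * gammaDLD eH)).
Proof.
have /andP[SG_lo SG_hi] := gammaSLD_cart_fst symG symH neT neU.
have /andP[SH_lo SH_hi] := gammaSLD_cart_fst symH symG neU neT.
have /andP[DG_lo DG_hi] := gammaDLD_cart_fst eG eH neT neU.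
have /andP[DH_lo DH_hi] := gammaDLD_cart_fst eH eG neU neT.
rewrite gammaSLD_cart_swap // in SH_lo SH_hi.
rewrite gammaDLD_cart_swap // in DH_lo DH_hi.
by rewrite !geq_max !leq_min SG_lo SG_hi SH_lo SH_hi DG_lo DG_hi DH_lo DH_hi.
Qed.
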